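(* Let $(W,S)$ be a Coxeter system with $S$ finite, $\phi:\operatorname{Ad}(Q_W)\to W$ the homomorphism $e_x\mapsto x$, and $C_W=\ker\phi$. If $x,y\in Q_W$ are conjugate in $W$, then $e_x^2=e_y^2$, and this element lies in $C_W$.
   Context: A Coxeter system $(W,S)$: $S$ finite, $m:S\times S\to\mathbb{N}\cup\{\infty\}$ with $m(s,s)=1$, $2\le m(s,t)=m(t,s)\le\infty$ for $s\ne t$, $W=\langle s\in S\mid (st)^{m(s,t)}=1\ (m(s,t)<\infty)\rangle$. The Coxeter quandle is $Q_W=\bigcup_{w\in W}w^{-1}Sw$ with $x\ast y=yxy$, and $\operatorname{Ad}(Q_W)=\langle e_x\ (x\in Q_W)\mid e_y^{-1}e_xe_y=e_{x\ast y}\rangle$. *)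

From mathcomp Require Import all_boot.
Set Implicit Arguments. Unset Strict Implicit. Unset Printing Implicit Defensive.


(* Groups given by presentations, modelled concretely: an element of the group
   <X | R> is a word over X^{+-1}; two words denote the same element iff they are
   related by the congruence generated by free cancellation and the relations. *)
Definition word (X : Type) := seq (X * bool). (* (x,false) = x, (x,true) = x^-1 *)

Definition winv (X : Type) (w : word X) : word X :=
  rev (map (fun p => (p.1, ~~ p.2)) w).

Inductive pres_eq (X : Type) (R : word X -> word X -> Prop) : word X -> word X -> Prop :=
| pe_refl w : pres_eq R w w
| pe_sym u v : pres_eq R u v -> pres_eq R v u
| pe_trans u v w : pres_eq R u v -> pres_eq R v w -> pres_eq R u w
| pe_cat u u' v v' : pres_eq R u u' -> pres_eq R v v' -> pres_eq R (u ++ v) (u' ++ v')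
| pe_cancel x b : pres_eq R [:: (x, b); (x, ~~ b)] [::]
| pe_rel u v : R u v -> pres_eq R u v.

(* Coxeter matrix: None stands for infinity. *)
Definition is_coxeter_matrix (S : Type) (m : S -> S -> option nat) : Prop :=
  (forall s, m s s = Some 1%N) /\ (forall s t, m s t = m t s) /\
  (forall s t k, s <> t -> m s t = Some k -> (2 <= k)%N).

Definition gen (X : Type) (x : X) : word X := [:: (x, false)].

Definition wpow (X : Type) (w : word X) (k : nat) : word X := flatten (nseq k w).

Definition coxeter_rel (S : Type) (m : S -> S -> option nat) (u v : word S) : Prop :=
  exists s t k, m s t = Some k /\ u = wpow (gen s ++ gen t) k /\ v = [::].

Definition W_eq (S : Type) (m : S -> S -> option nat) := pres_eq (@coxeter_rel S m).

Definition inQ (S : Type) (m : S -> S -> option nat) (w : word S) : Prop :=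
  exists s u, W_eq m w (winv u ++ gen s ++ u).

Definition QW (S : Type) (m : S -> S -> option nat) := {w : word S | inQ m w}.

(* Relations of Ad(Q_W): generators e_x indexed by elements of Q_W (words
   representing the same element of W give the same generator), and
   e_y^-1 e_x e_y = e_{x*y} with x*y = y x y. *)
Definition ad_rel (S : Type) (m : S -> S -> option nat) (a b : word (QW m)) : Prop :=
  (exists x y : QW m, W_eq m (proj1_sig x) (proj1_sig y) /\
      a = gen x /\ b = gen y) \/
  (exists x y z : QW m,
      W_eq m (proj1_sig z) (proj1_sig y ++ proj1_sig x ++ proj1_sig y) /\
      a = [:: (y, true); (x, false); (y, false)] /\ b = gen z).

Definition Ad_eq (S : Type) (m : S -> S -> option nat) := pres_eq (@ad_rel S m).

Definition phi (S : Type) (m : S -> S -> option nat) (a : word (QW m)) : word S :=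
  flatten (map (fun p : QW m * bool => if p.2 then winv (proj1_sig p.1) else proj1_sig p.1) a).
Arguments coxeter_rel {S} m u v.
Arguments ad_rel {S} m a b.
Arguments Ad_eq {S} m _ _.
Arguments W_eq {S} m _ _.
Arguments phi {S} m a.
Arguments inQ {S} m w.

From mathcomp Require Import all_boot.
Set Implicit Arguments. Unset Strict Implicit.

(* Conjugation by e_x twice returns e_q to itself, because e_x^-1 e_q e_x = e_{xqx}
   and the reflection x is an involution in W; hence e_x^2 is central in Ad(Q_W).
   In particular e_{x*s}^2 = e_s^-1 e_x^2 e_s = e_x^2, and moving x to y one
   simple reflection at a time gives e_x^2 = e_y^2.  Finally phi(e_x^2) = x^2 = 1. *)

Section PresentedGroup.

Variables (X : Type) (R : word X -> word X -> Prop).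

Lemma pres_eq_catl (l a b : word X) : pres_eq R a b -> pres_eq R (l ++ a) (l ++ b).
Proof. exact: pe_cat (pe_refl _ l). Qed.

Lemma pres_eq_catr (r a b : word X) : pres_eq R a b -> pres_eq R (a ++ r) (b ++ r).
Proof. by move=> eq_ab; apply: pe_cat eq_ab (pe_refl _ r). Qed.

Lemma winv_cat (u v : word X) : winv (u ++ v) = winv v ++ winv u.
Proof. by rewrite /winv map_cat rev_cat. Qed.

Lemma winv_cons (a : X) (b : bool) (w : word X) :
  winv ((a, b) :: w) = winv w ++ [:: (a, ~~ b)].
Proof. exact: winv_cat [:: (a, b)] w. Qed.

Lemma winvK : involutive (@winv X).
Proof. by elim=> [|[a b] w IHw] //=; rewrite winv_cons winv_cat IHw /= negbK. Qed.

Lemma pres_eq_cat_winv (w : word X) : pres_eq R (w ++ winv w) [::].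
Proof.
elim: w => [|[a b] w IHw]; first exact: pe_refl.
rewrite winv_cons catA; apply: pe_trans (pe_cancel R a b).
exact: (pres_eq_catl [:: (a, b)] (pres_eq_catr [:: (a, ~~ b)] IHw)).
Qed.

Lemma pres_eq_winv_cat (w : word X) : pres_eq R (winv w ++ w) [::].
Proof. by have := pres_eq_cat_winv (winv w); rewrite winvK. Qed.

Lemma pres_eq_winv (a b : word X) :
  pres_eq R a b -> pres_eq R (winv a) (winv b).
Proof.
move=> eq_ab; apply: pe_trans (_ : pres_eq R (winv a ++ b ++ winv b) _).
  by rewrite -{1}[winv a]cats0; apply/pres_eq_catl/pe_sym/pres_eq_cat_winv.
apply: pe_trans (_ : pres_eq R ((winv a ++ a) ++ winv b) _).
  by rewrite -catA; apply/pres_eq_catl/pres_eq_catr/pe_sym.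
exact: (pres_eq_catr _ (pres_eq_winv_cat a)).
Qed.

Lemma pres_eq_conj_cat (u a b : word X) :
  pres_eq R ((winv u ++ a ++ u) ++ (winv u ++ b ++ u)) (winv u ++ (a ++ b) ++ u).
Proof.
rewrite -!catA; apply/pres_eq_catl/pres_eq_catl.
by rewrite catA -[X in pres_eq _ _ X]cat0s; apply/pres_eq_catr/pres_eq_cat_winv.
Qed.

Lemma pres_eq_conj_of_commute (u a : word X) :
  pres_eq R (a ++ u) (u ++ a) -> pres_eq R (winv u ++ a ++ u) a.
Proof.
move=> comm_au; apply: pe_trans (pres_eq_catl (winv u) comm_au) _.
by rewrite catA -[X in pres_eq _ _ X]cat0s; apply/pres_eq_catr/pres_eq_winv_cat.
Qed.

Lemma pres_eq_commute_of_conj (u a : word X) :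
  pres_eq R (winv u ++ a ++ u) a -> pres_eq R (a ++ u) (u ++ a).
Proof.
move=> conj_ua; apply: pe_trans (pres_eq_catl u conj_ua).
rewrite catA -[X in pres_eq _ X _]cat0s; apply/pres_eq_catr/pe_sym/pres_eq_cat_winv.
Qed.

End PresentedGroup.

Section CoxeterGroup.

Variables (S : Type) (m : S -> S -> option nat).
Hypothesis hm : is_coxeter_matrix m.

Lemma W_eq_gen_sq (s : S) : W_eq m (gen s ++ gen s) [::].
Proof. by apply: pe_rel; exists s, s, 1; rewrite hm.1. Qed.

Lemma W_eq_letter (s : S) (b : bool) : W_eq m [:: (s, b)] (gen s).
Proof.
case: b; last exact: pe_refl.
apply: pe_trans (_ : W_eq m ([:: (s, true)] ++ gen s ++ gen s) _).
  exact: (pe_sym (pres_eq_catl [:: (s, true)] (W_eq_gen_sq s))).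
exact: (pres_eq_catr (gen s) (pe_cancel _ s true)).
Qed.

Lemma inQ_gen (s : S) : inQ m (gen s).
Proof. by exists s, [::]; apply: pe_refl. Qed.

Lemma inQ_conj (x w : word S) : inQ m x -> inQ m (winv w ++ x ++ w).
Proof.
case=> s [u eq_x]; exists s, (u ++ w).
by have := pres_eq_catl (winv w) (pres_eq_catr w eq_x); rewrite winv_cat -!catA.
Qed.

Lemma reflection_winv (x : word S) : inQ m x -> W_eq m (winv x) x.
Proof.
case=> s [u eq_x]; apply: pe_trans (pres_eq_winv eq_x) (pe_trans _ (pe_sym eq_x)).
rewrite !winv_cat winvK -catA.
exact/pres_eq_catl/pres_eq_catr/W_eq_letter.
Qed.

Lemma reflection_sq (x : word S) : inQ m x -> W_eq m (x ++ x) [::].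
Proof.
move=> Qx; apply: pe_trans (pres_eq_winv_cat _ x).
exact: pe_cat (pe_sym (reflection_winv Qx)) (pe_refl _ _).
Qed.

Lemma reflection_conjK (x a : word S) :
  inQ m x -> W_eq m (winv x ++ (winv x ++ a ++ x) ++ x) a.
Proof.
move=> Qx; have xx1 := reflection_sq Qx.
rewrite -!catA catA -winv_cat.
apply: pe_trans (pe_cat (pres_eq_winv xx1) (pres_eq_catl a xx1)) _.
by rewrite cats0; apply: pe_refl.
Qed.

End CoxeterGroup.

Section AdjointGroup.

Variables (S : Type) (m : S -> S -> option nat).
Hypothesis hm : is_coxeter_matrix m.

(* The quandle product x * y = yxy, represented by the word y^-1 x y, which
   lies in Q_W without any hypothesis on m. *)
Definition qmul (x y : QW m) : QW m :=
  exist _ (winv (sval y) ++ sval x ++ sval y) (inQ_conj (sval y) (proj2_sig x)).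

Definition qgen (s : S) : QW m := exist _ (gen s) (inQ_gen m s).

Lemma Ad_eq_gen (x y : QW m) : W_eq m (sval x) (sval y) -> Ad_eq m (gen x) (gen y).
Proof. by move=> eq_xy; apply: pe_rel; left; exists x, y. Qed.

Lemma Ad_eq_conj_gen (x y : QW m) :
  Ad_eq m (winv (gen y) ++ gen x ++ gen y) (gen (qmul x y)).
Proof.
apply: pe_rel; right; exists x, y, (qmul x y); split=> //.
exact: (pres_eq_catr _ (reflection_winv hm (proj2_sig y))).
Qed.

Lemma Ad_eq_gen_sq_commute (x q : QW m) :
  Ad_eq m (gen q ++ (gen x ++ gen x)) ((gen x ++ gen x) ++ gen q).
Proof.
apply: pres_eq_commute_of_conj.
apply: pe_trans (_ : Ad_eq m (winv (gen x) ++ gen (qmul q x) ++ gen x) _).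
  exact: (pres_eq_catl (winv (gen x)) (pres_eq_catr (gen x) (Ad_eq_conj_gen q x))).
apply: pe_trans (Ad_eq_conj_gen _ _) (Ad_eq_gen _).
exact: reflection_conjK (proj2_sig x).
Qed.

Lemma Ad_eq_qmul_sq (x y : QW m) :
  Ad_eq m (gen (qmul x y) ++ gen (qmul x y)) (gen x ++ gen x).
Proof.
apply: pe_trans (_ : Ad_eq m (winv (gen y) ++ (gen x ++ gen x) ++ gen y) _).
  apply: pe_trans (pres_eq_conj_cat _ _ _ _).
  by apply: pe_sym; apply: pe_cat; apply: Ad_eq_conj_gen.
exact/pres_eq_conj_of_commute/pe_sym/Ad_eq_gen_sq_commute.
Qed.

Lemma Ad_eq_conj_sq (w : word S) (x y : QW m) :
  W_eq m (sval y) (winv w ++ sval x ++ w) -> Ad_eq m (gen x ++ gen x) (gen y ++ gen y).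
Proof.
elim: w x => [|[s b] w IHw] x eq_y.
  by rewrite cats0 in eq_y; apply: pe_cat; apply/Ad_eq_gen/pe_sym.
apply: pe_trans (pe_sym (Ad_eq_qmul_sq x (qgen s))) (IHw _ _).
apply: pe_trans eq_y _; rewrite winv_cons -catA; apply: pres_eq_catl.
have letter_eq c c' : W_eq m [:: (s, c)] [:: (s, c')].
  exact: pe_trans (W_eq_letter hm s c) (pe_sym (W_eq_letter hm s c')).
rewrite /= -!catA.
exact: (pe_cat (letter_eq _ true) (pres_eq_catl (sval x) (pres_eq_catr w (letter_eq b false)))).
Qed.

End AdjointGroup.

Theorem lemma2p6 (S : finType) (m : S -> S -> option nat)
  (hm : is_coxeter_matrix m) (x y : QW m) :
  (exists w : word S, W_eq m (proj1_sig y) (winv w ++ proj1_sig x ++ w)) ->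
  Ad_eq m (gen x ++ gen x) (gen y ++ gen y) /\
  W_eq m (phi m (gen x ++ gen x)) [::].
Proof.
case=> w eq_y; split; first exact: Ad_eq_conj_sq eq_y.
by rewrite /phi /= cats0; apply: reflection_sq (proj2_sig x).
Qed.
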